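(* Let $(M,d)$ be a bounded metric space such that the family $\mathcal{A}(M)$ of admissible subsets is compact and has normal structure. Then every orbitally wrt nonexpansive mapping $T: M\to M$ has a fixed point in $M$.
   Context: For $x\in M$ and $K\subseteq M$: $r_x(K)=\sup\{d(x,y):y\in K\}$, $r(K)=\inf\{r_x(K):x\in K\}$, $\delta(K)$ is the diameter of $K$. A bounded subset is admissible if it equals the intersection of all closed balls of $M$ containing it. $\mathcal{A}(M)$ is compact if every descending chain of nonempty admissible sets has nonempty intersection; it has normal structure if $r(K)<\delta(K)$ for every $K\in\mathcal{A}(M)$ with $\delta(K)>0$. $O_T(y)=\{y,Ty,T^2y,\dots\}$; $T$ is orbitally wrt nonexpansive if $d(Tx,Ty)\le r_x(O_T(y))$ for all $x,y\in M$. *)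

From mathcomp Require Import all_boot all_order all_algebra.
From mathcomp Require Import classical_sets boolp reals.
Set Implicit Arguments. Unset Strict Implicit. Unset Printing Implicit Defensive.
Import Order.TTheory GRing.Theory Num.Theory.
Local Open Scope ring_scope.
Local Open Scope classical_set_scope.

Section MetricDefs.
Variables (R : realType) (M : Type) (d : M -> M -> R).

Definition is_metric : Prop :=
  (forall x y, d x y = 0 <-> x = y) /\
  (forall x y, d x y = d y x) /\
  (forall x y z, d x z <= d x y + d y z).

Definition bounded_metric : Prop := exists B : R, forall x y, d x y <= B.

Definition cball (x : M) (r : R) : set M := [set y | d x y <= r].

Definition admissible (K : set M) : Prop :=
  K = [set z | forall (x : M) (r : R), 0 <= r -> K `<=` cball x r -> cball x r z].

Definition rad_at (x : M) (K : set M) : R := sup [set d x y | y in K].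

Definition cheb_rad (K : set M) : R := inf [set rad_at x K | x in K].

Definition diam (K : set M) : R := sup [set d x y | x in K & y in K].

(* A(M) is compact: every descending chain (a family totally ordered by
   inclusion) of nonempty admissible sets has nonempty intersection *)
Definition adm_compact : Prop :=
  forall F : set (set M),
    (forall K, F K -> admissible K /\ K !=set0) ->
    (forall K L, F K -> F L -> K `<=` L \/ L `<=` K) ->
    (\bigcap_(K in F) K) !=set0.

Definition adm_normal : Prop :=
  forall K, admissible K -> 0 < diam K -> cheb_rad K < diam K.

Definition orbit (T : M -> M) (y : M) : set M := range (fun n : nat => iter n T y).

Definition orbitally_nonexpansive (T : M -> M) : Prop :=
  forall x y, d (T x) (T y) <= rad_at x (orbit T y).

End MetricDefs.

From Pilot Require Import Defs.
From mathcomp Require Import all_boot all_order all_algebra.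
From mathcomp Require Import classical_sets boolp reals.
From mathcomp Require Import lra.
Set Implicit Arguments. Unset Strict Implicit. Unset Printing Implicit Defensive.
Import Order.TTheory GRing.Theory Num.Theory.
Local Open Scope classical_set_scope.
Local Open Scope ring_scope.

(* Zorn's lemma and the compactness of A(M) give a minimal nonempty admissible
   T-invariant set K. Minimality makes K the admissible hull of T(K), so every
   closed ball containing T(K) contains K. For x0 in K and rho = r_x0(K),
   orbital nonexpansiveness then shows that K ∩ ⋂_{y ∈ K} B(y, rho) is
   T-invariant; it is admissible and contains x0, hence equals K, which gives
   δ(K) <= r_x0(K) for every x0 in K. Normal structure forces δ(K) = 0, so K is
   a point fixed by T. *)

Lemma Zorn_bigcap (T : Type) (P : set (set T)) :
  (forall F : set (set T), F `<=` P -> total_on F subset ->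
      P (\bigcap_(X in F) X)) ->
  exists A, P A /\ forall B, P B -> B `<=` A -> B = A.
Proof.
move=> chainP.
have [|A [PA maxA]] := @Zorn_bigcup T [set A | P (~` A)].
  move=> F FP Ftot; rewrite /= setC_bigcup -(bigcap_image _ setC id); apply: chainP.
    by move=> _ [X FX <-]; exact: FP.
  move=> _ _ [X FX <-] [Y FY <-].
  by have [XY|YX] := Ftot _ _ FX FY; [right|left]; exact: subsetC.
exists (~` A); split=> // B PB BA; apply: contrapT => neqBA.
apply: (maxA (~` B)); last by rewrite /= setCK.
split; first exact: subsetCr.
by move=> /subsetCl AB; apply: neqBA; apply/seteqP.
Qed.

Section AdmissibleSets.
Variables (R : realType) (M : Type) (d : M -> M -> R).

Definition adm_hull (S : set M) : set M :=
  [set z | forall x r, 0 <= r -> S `<=` cball d x r -> cball d x r z].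

Lemma sub_adm_hull S : S `<=` adm_hull S.
Proof. by move=> z Sz x r _; apply. Qed.

Lemma adm_hull_min S K : admissible d K -> S `<=` K -> adm_hull S `<=` K.
Proof.
move=> admK SK z Sz; rewrite admK => x r r0 Kxr.
by apply: Sz => //; exact: subset_trans Kxr.
Qed.

Lemma admissibleP K : admissible d K <-> adm_hull K `<=` K.
Proof.
split=> [admK|hullK]; first exact: adm_hull_min.
by apply/seteqP; split; [exact: sub_adm_hull|].
Qed.

Lemma admissible_adm_hull S : admissible d (adm_hull S).
Proof.
by apply/admissibleP => z Sz x r r0 Sxr; apply: Sz => // w; apply.
Qed.

Lemma admissible_cball x r : 0 <= r -> admissible d (cball d x r).
Proof. by move=> r0; apply/admissibleP => z; apply. Qed.

Lemma admissible_bigcap (I : Type) (P : set I) (F : I -> set M) :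
  (forall i, P i -> admissible d (F i)) -> admissible d (\bigcap_(i in P) F i).
Proof.
move=> admF; apply/admissibleP => z Fz i Pi.
exact: adm_hull_min (admF i Pi) (bigcap_inf Pi) z Fz.
Qed.

Lemma admissible_setI K L :
  admissible d K -> admissible d L -> admissible d (K `&` L).
Proof.
move=> admK admL; apply/admissibleP => z KLz.
by split; [exact: adm_hull_min admK (@subIsetl _ K L) z KLz
          |exact: adm_hull_min admL (@subIsetr _ K L) z KLz].
Qed.

End AdmissibleSets.

Lemma orbit_sub (M : Type) (T : M -> M) (K : set M) y :
  {homo T : x / K x} -> K y -> Defs.orbit T y `<=` K.
Proof. by move=> TK Ky _ [n _ <-]; elim: n => //= n; exact: TK. Qed.

Section MinimalInvariant.
Variables (R : realType) (M : Type) (d : M -> M -> R) (T : M -> M).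

Definition adm_invariant (K : set M) :=
  [/\ admissible d K, K !=set0 & {homo T : x / K x}].

Definition minimal_adm_invariant (K : set M) :=
  adm_invariant K /\ forall L, adm_invariant L -> L `<=` K -> L = K.

Lemma exists_minimal_adm_invariant :
  adm_compact d -> exists K, minimal_adm_invariant K.
Proof.
move=> compA; apply: Zorn_bigcap => F FP Ftot; split.
- by apply: admissible_bigcap => K /FP[].
- by apply: compA => // K /FP[].
- by move=> x Fx K FK; case: (FP _ FK) => _ _; apply; exact: Fx.
Qed.

Variables (K : set M) (minK : minimal_adm_invariant K).

Lemma adm_hull_image_minimal : adm_hull d (T @` K) = K.
Proof.
have [[admK [k Kk] TK] minimal] := minK.
have hullK : adm_hull d (T @` K) `<=` K.
  by apply: adm_hull_min admK _ => _ [x Kx <-]; exact: TK.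
have TK_hull : T @` K `<=` adm_hull d (T @` K) by exact: sub_adm_hull.
apply: (minimal _ _ hullK); split; first exact: admissible_adm_hull.
  by exists (T k); apply: TK_hull; exists k.
by move=> x /hullK Kx; apply: TK_hull; exists x.
Qed.

Lemma minimal_sub_cball x r :
  0 <= r -> T @` K `<=` cball d x r -> K `<=` cball d x r.
Proof. by move=> r0 TKxr; rewrite -adm_hull_image_minimal => z; apply. Qed.

End MinimalInvariant.

Section BoundedMetric.
Variables (R : realType) (M : Type) (d : M -> M -> R).
Hypotheses (hmet : is_metric d) (hbdd : bounded_metric d).

Lemma distC x y : d x y = d y x.
Proof. by case: hmet => _ []. Qed.

Lemma dist_eq0 x y : d x y = 0 -> x = y.
Proof. by case: hmet => /(_ x y) []. Qed.

Lemma dist_ge0 x y : 0 <= d x y.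
Proof.
have [d0 [_ dtri]] := hmet.
by have := dtri x y x; rewrite (proj2 (d0 x x) erefl) (distC y x); lra.
Qed.

Let dist_ubound (S : set M) x : has_ubound [set d x y | y in S].
Proof. by case: hbdd => B hB; exists B => _ [y _ <-]. Qed.

Lemma le_rad_at x K y : K y -> d x y <= rad_at d x K.
Proof. by move=> Ky; apply: ub_le_sup (dist_ubound K x) _ _; exists y. Qed.

Lemma rad_at_le x K r : K !=set0 -> K `<=` cball d x r -> rad_at d x K <= r.
Proof.
move=> [k Kk] Kxr; apply: ge_sup => [|_ [y Ky <-]]; last exact: Kxr.
by exists (d x k), k.
Qed.

Lemma le_diam K x y : K x -> K y -> d x y <= diam d K.
Proof.
move=> Kx Ky; apply: ub_le_sup; last by exists x => //; exists y.
by case: hbdd => B hB; exists B => _ [a _ [b _ <-]].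
Qed.

Lemma diam_le K r : K !=set0 ->
  (forall x y, K x -> K y -> d x y <= r) -> diam d K <= r.
Proof.
move=> [k Kk] Kr; apply: ge_sup => [|_ [x Kx [y Ky <-]]]; last exact: Kr.
by exists (d k k), k => //; exists k.
Qed.

Lemma diam_ge0 K : K !=set0 -> 0 <= diam d K.
Proof. by move=> [k Kk]; apply: le_trans (le_diam Kk Kk); exact: dist_ge0. Qed.

Lemma exists_rad_at_lt_diam K : adm_normal d -> admissible d K ->
  K !=set0 -> 0 < diam d K -> exists2 x, K x & rad_at d x K < diam d K.
Proof.
move=> normA admK [k Kk] Kgt0.
have [|_ [x Kx <-] ltx] := inf_lt _ (normA K admK Kgt0); last by exists x.
by exists (rad_at d k K), k.
Qed.

End BoundedMetric.

Section MinimalInvariantDiametral.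
Variables (R : realType) (M : Type) (d : M -> M -> R) (T : M -> M).
Hypotheses (hmet : is_metric d) (hbdd : bounded_metric d)
  (hT : orbitally_nonexpansive d T).

Definition centre_set (K : set M) (r : R) : set M :=
  K `&` \bigcap_(y in K) cball d y r.

Lemma admissible_centre_set K r :
  0 <= r -> admissible d K -> admissible d (centre_set K r).
Proof.
move=> r0 admK; apply: admissible_setI admK _.
by apply: admissible_bigcap => y _; exact: admissible_cball.
Qed.

Variables (K : set M) (minK : minimal_adm_invariant d T K).

Lemma centre_set_invariant r : 0 <= r -> {homo T : x / centre_set K r x}.
Proof.
have [[_ _ TK] _] := minK.
move=> r0 x [Kx xr]; split; first exact: TK.
move=> y Ky; rewrite /cball /= distC //.
apply: (minimal_sub_cball minK r0) Ky => _ [z Kz <-].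
apply: le_trans (hT x z) _; apply: rad_at_le => //; first by exists z, 0%N.
by move=> w /(orbit_sub TK Kz) Kw; rewrite /cball /= distC //; exact: xr.
Qed.

Lemma diam_le_rad_at_minimal x0 : K x0 -> diam d K <= rad_at d x0 K.
Proof.
move=> Kx0; have [[admK K0 _] minimal] := minK.
set rho := rad_at d x0 K.
have rho0 : 0 <= rho by apply: le_trans (le_rad_at hbdd x0 Kx0); exact: dist_ge0.
have centreK : centre_set K rho = K.
  apply: minimal; last exact: subIsetl.
  split; [exact: admissible_centre_set | | exact: centre_set_invariant].
  by exists x0; split=> // y Ky; rewrite /cball /= distC //; exact: le_rad_at.
apply: diam_le => // x y; rewrite -{1}centreK => -[_ xr] Ky.
by rewrite distC //; exact: xr.
Qed.

End MinimalInvariantDiametral.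

Theorem corollary2p4 (R : realType) (M : Type) (d : M -> M -> R)
  (m0 : M)
  (hmet : is_metric d) (hbdd : bounded_metric d)
  (hcomp : adm_compact d) (hnorm : adm_normal d)
  (T : M -> M) (hT : orbitally_nonexpansive d T) :
  exists x : M, T x = x.
Proof.
have [K minK] := exists_minimal_adm_invariant T hcomp.
have [[admK K0 TK] _] := minK; have [k Kk] := K0.
have diamK0 : diam d K = 0.
  apply/eqP; rewrite eq_le diam_ge0 // andbT leNgt; apply/negP => Kgt0.
  have [x0 Kx0 ltx0] := exists_rad_at_lt_diam hnorm admK K0 Kgt0.
  by move: (diam_le_rad_at_minimal hmet hbdd hT minK Kx0); rewrite leNgt ltx0.
exists k; apply/esym/(dist_eq0 hmet)/eqP.
by rewrite eq_le dist_ge0 // -diamK0 le_diam //; exact: TK.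
Qed.
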